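(* Let $X$ be a random variable taking values in a set $\mathcal{X}$ and $Y \in [0,1]$ a target outcome. Let $\mathcal{F}$ be a class of functions $\mathcal{X} \to \mathbb{R}$ that is closed under affine transformations, i.e. $f \in \mathcal{F}$ implies $a + bf \in \mathcal{F}$ for all $a, b \in \mathbb{R}$, and let $\tilde{\mathcal{F}} = \{f \in \mathcal{F} : \mathcal{R}(f) \subseteq [0,1]\}$. Let $h : \mathcal{X} \to [0,1]$ have countable range $\mathcal{R}(h)$ (with $\mathbb{P}(h(X) = v) > 0$ for each $v \in \mathcal{R}(h)$). If for all $f \in \mathcal{F}$ and $v \in \mathcal{R}(h)$, $$\mathbb{E}\left[(h(X) - Y)^2 - (f(X) - Y)^2 \mid h(X) = v\right] < \alpha^2,$$ then the level sets $\{x \in \mathcal{X} : h(x) = v\}$, $v \in \mathcal{R}(h)$, form a $(2\alpha)$-multicalibrated partition with respect to $\tilde{\mathcal{F}}$ and $Y$.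
   Context: $\mathcal{R}(f)$ denotes the range of a function $f$. A set $S \subseteq \mathcal{X}$ is $\alpha'$-indistinguishable with respect to a function class $\mathcal{G}$ and $Y$ if $|\mathrm{Cov}(g(X), Y \mid X \in S)| \le \alpha'$ for all $g \in \mathcal{G}$. Sets form an $\alpha'$-multicalibrated partition with respect to $\mathcal{G}$ and $Y$ if they partition $\mathcal{X}$ and each is $\alpha'$-indistinguishable with respect to $\mathcal{G}$ and $Y$. *)

From HB Require Import structures.
From mathcomp Require Import all_boot all_order all_algebra.
From mathcomp Require Import all_classical all_reals all_analysis.
Set Implicit Arguments. Unset Strict Implicit. Unset Printing Implicit Defensive.
Import Order.TTheory GRing.Theory Num.Theory.
Local Open Scope classical_set_scope.
Local Open Scope ring_scope.
Local Open Scope ereal_scope.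

Section Defs.
Context (d : measure_display) (T : measurableType d) (R : realType).

Definition condE (P : probability T R) (A : set T) (Z : T -> \bar R) : \bar R :=
  (\int[P]_(t in A) Z t) * ((fine (P A))^-1)%:E.

Definition condCov (P : probability T R) (A : set T) (U V : T -> R) : \bar R :=
  let mU := fine (condE P A (fun t => (U t)%:E)) in
  let mV := fine (condE P A (fun t => (V t)%:E)) in
  condE P A (fun t => ((U t - mU) * (V t - mV))%:E).

Context (d' : measure_display) (Xs : measurableType d').

Definition indistinguishable (P : probability T R) (X : T -> Xs) (Y : T -> R)
  (G : set (Xs -> R)) (alpha' : R) (S : set Xs) : Prop :=
  forall g, G g -> `| condCov P (X @^-1` S) (fun t => g (X t)) Y | <= alpha'%:E.

Definition multicalibrated_partition (P : probability T R) (X : T -> Xs)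
  (Y : T -> R) (G : set (Xs -> R)) (alpha' : R)
  (I : Type) (D : set I) (S : I -> set Xs) : Prop :=
  [/\ \bigcup_(i in D) S i = setT, trivIset D S &
      forall i, D i -> indistinguishable P X Y G alpha' (S i)].

End Defs.

(* On a level set S = {h = v}, let u = g(X), m = E[u | S] and c = Cov(u, Y | S).
   The affine competitor f = (v - c m) + c g lies in F and equals v + c (u - m)
   on S, where h = v, so
     E[(h - Y)^2 - (f - Y)^2 | S] = 2 c Cov(u, Y | S) - c^2 Var(u | S) >= c^2,
   since Var(u | S) <= 1 when u takes values in [0, 1].  The hypothesis bounds
   the left-hand side by alpha^2, hence |c| < alpha, which is even stronger
   than the claimed bound 2 alpha. *)

From HB Require Import structures.
From mathcomp Require Import all_boot all_order all_algebra.
From mathcomp Require Import all_classical all_reals all_analysis.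
From mathcomp Require Import measurable_realfun ring lra.
Import Order.TTheory GRing.Theory Num.Theory.
Local Open Scope classical_set_scope.
Local Open Scope ring_scope.

Section bounded_measurable.
Context {d : measure_display} {T : measurableType d} {R : realType}.

Definition bounded_measurable (Z : T -> R) :=
  measurable_fun setT Z /\ exists M : R, forall t, `|Z t| <= M.

Lemma bounded_measurable_cst (c : R) : bounded_measurable (fun _ => c).
Proof. by split; [exact: measurable_cst | exists `|c|]. Qed.

Lemma bounded_measurableD (f g : T -> R) : bounded_measurable f ->
  bounded_measurable g -> bounded_measurable (fun t => f t + g t).
Proof.
move=> [mf [M1 f_le]] [mg [M2 g_le]]; split; first exact: measurable_funD.
by exists (M1 + M2) => t; rewrite (le_trans (ler_normD _ _)) ?lerD.
Qed.

Lemma bounded_measurableN (f : T -> R) :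
  bounded_measurable f -> bounded_measurable (fun t => - f t).
Proof.
move=> [mf [M f_le]]; split; first exact: measurableT_comp.
by exists M => t; rewrite normrN.
Qed.

Lemma bounded_measurableB (f g : T -> R) : bounded_measurable f ->
  bounded_measurable g -> bounded_measurable (fun t => f t - g t).
Proof. by move=> bf bg; apply/bounded_measurableD/bounded_measurableN. Qed.

Lemma bounded_measurableM (f g : T -> R) : bounded_measurable f ->
  bounded_measurable g -> bounded_measurable (fun t => f t * g t).
Proof.
move=> [mf [M1 f_le]] [mg [M2 g_le]]; split; first exact: measurable_funM.
by exists (M1 * M2) => t; rewrite normrM ler_pM.
Qed.

Lemma bounded_measurableX (f : T -> R) (n : nat) :
  bounded_measurable f -> bounded_measurable (fun t => f t ^+ n).
Proof.
move=> bf; elim: n => [|n IHn]; first exact: bounded_measurable_cst.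
by under eq_fun do rewrite exprS; exact: bounded_measurableM.
Qed.

Lemma bounded_measurable_01 (f : T -> R) :
  measurable_fun setT f -> (forall t, 0 <= f t <= 1) -> bounded_measurable f.
Proof.
move=> mf f01; split=> //; exists 1 => t.
by case/andP: (f01 t) => f0 f1; rewrite ger0_norm.
Qed.

Lemma bounded_measurable_integrable (mu : {finite_measure set T -> \bar R})
    {A : set T} {Z : T -> R} :
  measurable A -> bounded_measurable Z -> mu.-integrable A (EFin \o Z).
Proof.
move=> mA [mZ [M Z_le]]; apply: measurable_bounded_integrable => //.
- by rewrite ltey_eq fin_num_measure.
- exact: measurable_funS mZ.
- exists M; split; first exact: num_real.
  by move=> y /ltW My x _; exact: le_trans (Z_le x) My.
Qed.

End bounded_measurable.

Ltac solve_bounded_measurable :=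
  repeat first [ assumption | exact: bounded_measurable_cst
               | apply: bounded_measurableB | apply: bounded_measurableD
               | apply: bounded_measurableN | apply: bounded_measurableM
               | apply: bounded_measurableX ].

Section conditional_mean.
Context {d : measure_display} {T : measurableType d} {R : realType}.
Variables (P : probability T R) (A : set T).
Hypotheses (mA : measurable A) (PA_gt0 : (0 < P A)%E).

Definition cmean (Z : T -> R) : R := (\int[P]_(t in A) Z t) / fine (P A).

Definition ccov (U V : T -> R) : R :=
  cmean (fun t => (U t - cmean U) * (V t - cmean V)).

Lemma condE_eq_in (Z1 Z2 : T -> \bar R) :
  {in A, Z1 =1 Z2} -> condE P A Z1 = condE P A Z2.
Proof. by move=> Z12; rewrite /condE (eq_integral _ _ Z12). Qed.

Lemma condE_EFin (Z : T -> R) : bounded_measurable Z ->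
  condE P A (fun t => (Z t)%:E) = (cmean Z)%:E.
Proof.
move=> bZ; have iZ := bounded_measurable_integrable P mA bZ.
by rewrite /condE -[X in (X * _)%E](fineK (integrable_fin_num mA iZ)).
Qed.

Lemma condCov_EFin (U V : T -> R) : bounded_measurable U ->
  bounded_measurable V -> condCov P A U V = (ccov U V)%:E.
Proof.
by move=> bU bV; rewrite /condCov !condE_EFin //; solve_bounded_measurable.
Qed.

Lemma fine_PA_gt0 : 0 < fine (P A).
Proof.
by rewrite fine_gt0 // PA_gt0 /= (le_lt_trans (probability_le1 P mA)) ?ltry.
Qed.

Lemma cmean_cst (r : R) : cmean (fun _ => r) = r.
Proof. by rewrite /cmean Rintegral_cst // mulfK // gt_eqF // fine_PA_gt0. Qed.

Lemma cmeanD (U V : T -> R) : bounded_measurable U -> bounded_measurable V ->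
  cmean (fun t => U t + V t) = cmean U + cmean V.
Proof.
move=> bU bV; rewrite /cmean -mulrDl RintegralD //;
  exact: bounded_measurable_integrable.
Qed.

Lemma cmeanB (U V : T -> R) : bounded_measurable U -> bounded_measurable V ->
  cmean (fun t => U t - V t) = cmean U - cmean V.
Proof.
move=> bU bV; rewrite /cmean -mulrBl RintegralB //;
  exact: bounded_measurable_integrable.
Qed.

Lemma cmeanZl (r : R) (U : T -> R) : bounded_measurable U ->
  cmean (fun t => r * U t) = r * cmean U.
Proof.
move=> bU; rewrite /cmean RintegralZl ?mulrA //;
  exact: bounded_measurable_integrable.
Qed.

Lemma le_cmean (U V : T -> R) : bounded_measurable U -> bounded_measurable V ->
  (forall t, A t -> U t <= V t) -> cmean U <= cmean V.
Proof.
move=> bU bV UV; rewrite /cmean ler_pM2r ?invr_gt0 ?fine_PA_gt0 //.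
by apply: le_Rintegral => //; exact: bounded_measurable_integrable.
Qed.

Lemma cmean_centered (U : T -> R) : bounded_measurable U ->
  cmean (fun t => U t - cmean U) = 0.
Proof.
by move=> bU; rewrite cmeanB ?cmean_cst ?subrr //; exact: bounded_measurable_cst.
Qed.

Lemma ccov_self_le1 (U : T -> R) : bounded_measurable U ->
  (forall t, 0 <= U t <= 1) -> ccov U U <= 1.
Proof.
move=> bU U01.
have m0 : 0 <= cmean U.
  rewrite -(cmean_cst 0) le_cmean //; first exact: bounded_measurable_cst.
  by move=> t _; case/andP: (U01 t).
have m1 : cmean U <= 1.
  rewrite -(cmean_cst 1) le_cmean //; first exact: bounded_measurable_cst.
  by move=> t _; case/andP: (U01 t).
rewrite -(cmean_cst 1) le_cmean //; first by solve_bounded_measurable.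
  exact: bounded_measurable_cst.
by move=> t _; case/andP: (U01 t) => U0 U1; nra.
Qed.

Lemma cmean_sq_gain (U Y : T -> R) (v c : R) :
  bounded_measurable U -> bounded_measurable Y ->
  cmean (fun t => (v - Y t) ^+ 2 - (v + c * (U t - cmean U) - Y t) ^+ 2)
  = 2 * c * ccov U Y - c ^+ 2 * ccov U U.
Proof.
move=> bU bY.
have -> : (fun t => (v - Y t) ^+ 2 - (v + c * (U t - cmean U) - Y t) ^+ 2) =
  (fun t => 2 * c * ((U t - cmean U) * (Y t - cmean Y))
            + 2 * c * (cmean Y - v) * (U t - cmean U)
            - c ^+ 2 * ((U t - cmean U) * (U t - cmean U))).
  by apply/funext => t; ring.
rewrite cmeanB; try by solve_bounded_measurable.
rewrite cmeanD; try by solve_bounded_measurable.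
rewrite !cmeanZl; try by solve_bounded_measurable.
by rewrite cmean_centered // mulr0 addr0.
Qed.

Lemma ccov_sqr_le_gain (U Y : T -> R) (v : R) :
  bounded_measurable U -> bounded_measurable Y -> (forall t, 0 <= U t <= 1) ->
  ccov U Y ^+ 2 <=
  cmean (fun t => (v - Y t) ^+ 2 - (v + ccov U Y * (U t - cmean U) - Y t) ^+ 2).
Proof.
move=> bU bY U01; rewrite cmean_sq_gain //.
have := ccov_self_le1 U bU U01; set c := ccov U Y; nra.
Qed.

End conditional_mean.

Lemma level_sets_multicalibrated {d : measure_display} {T : measurableType d}
    {R : realType} {d' : measure_display} {Xs : measurableType d'} {I : Type}
    (P : probability T R) (X : T -> Xs) (Y : T -> R) (G : set (Xs -> R))
    (a : R) (h : Xs -> I) :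
  (forall v, range h v -> indistinguishable P X Y G a (h @^-1` [set v])) ->
  multicalibrated_partition P X Y G a (range h) (fun v => h @^-1` [set v]).
Proof.
split=> //; last exact: trivIset_preimage1.
by apply/seteqP; split=> // x _; exists (h x) => //; exists x.
Qed.

Theorem lemma5 (d : measure_display) (T : measurableType d) (R : realType)
  (P : probability T R) (d' : measure_display) (Xs : measurableType d')
  (X : T -> Xs) (Y : T -> R) (F : set (Xs -> R)) (h : Xs -> R) (alpha : R) :
  measurable_fun setT X ->
  measurable_fun setT Y ->
  (forall t, 0 <= Y t <= 1) ->
  (forall f, F f -> measurable_fun setT f) ->
  (forall f, F f -> forall a b : R, F (fun x => a + b * f x)) ->
  measurable_fun setT h ->
  range h `<=` `[0, 1] ->
  countable (range h) ->
  (forall v, range h v -> (0 < P (X @^-1` (h @^-1` [set v])))%E) ->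
  0 <= alpha ->
  (forall f, F f -> forall v, range h v ->
     (condE P (X @^-1` (h @^-1` [set v]))
        (fun t => ((h (X t) - Y t) ^+ 2 - (f (X t) - Y t) ^+ 2)%:E)
      < (alpha ^+ 2)%:E)%E) ->
  multicalibrated_partition P X Y
    [set f | F f /\ range f `<=` `[0, 1]] (2 * alpha)
    (range h) (fun v => h @^-1` [set v]).
Proof.
move=> mX mY Y01 mF F_affine mh _ _ PA_gt0 alpha_ge0 gain_lt.
apply: level_sets_multicalibrated => v hv g [Fg g01].
set A := X @^-1` (h @^-1` [set v]).
have mA : measurable A.
  rewrite -[A]setTI.
  exact: (measurableT_comp mh mX) measurableT _ (measurable_set1 v).
have {}PA_gt0 : (0 < P A)%E := PA_gt0 v hv.
set u := fun t => g (X t).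
have u01 t : 0 <= u t <= 1 by have := g01 (u t) (imageT _ _); rewrite /= in_itv.
have bu : bounded_measurable u.
  by apply: bounded_measurable_01 => //; exact: measurableT_comp (mF _ Fg) mX.
have bY : bounded_measurable Y by exact: bounded_measurable_01.
rewrite (condCov_EFin _ _ mA) //; set c := ccov P A u Y.
have := gain_lt _ (F_affine _ Fg (v - c * cmean P A u) c) v hv.
rewrite -/A (condE_eq_in P A _ (fun t =>
  ((v - Y t) ^+ 2 - (v + c * (u t - cmean P A u) - Y t) ^+ 2)%:E)); last first.
  by move=> t /[!inE] /= ->; congr EFin; rewrite /u; ring.
rewrite (condE_EFin _ _ mA) ?lte_fin; last by solve_bounded_measurable.
move=> /(le_lt_trans (ccov_sqr_le_gain _ _ mA PA_gt0 _ _ v bu bY u01)) c2_lt.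
have c_lt : `|c| < alpha.
  by rewrite -(ltr_pXn2r (_ : 0 < 2)%N) ?nnegrE // real_normK ?num_real.
by rewrite lee_fin; lra.
Qed.
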